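(* Let $H$ be a dephased complex Hadamard matrix of order $6$ such that some row other than the first, or some column other than the first, consists entirely of cube roots of unity. Then either $H$ is equivalent to the matrix $S_6^{(0)}$, or $H$ belongs to the family $K_6^{(3)}$.
   Context: A complex Hadamard matrix of order $n$ is an $n\times n$ complex matrix with all entries of modulus $1$ satisfying $HH^\ast=nI_n$; it is dephased if its first row and column consist of $1$'s, and its core is its lower right $(n-1)\times(n-1)$ submatrix. $H$ and $K$ are equivalent if $K=P_1D_1HD_2P_2$ with $P_i$ permutation matrices and $D_i$ diagonal unitary matrices. A $6\times 6$ complex Hadamard matrix belongs to the family $K_6^{(3)}$ if it is equivalent to a dephased complex Hadamard matrix whose core contains an entry $-1$. With $\omega=e^{2\pi i/3}$, \[S_6^{(0)}=\begin{bmatrix}1&1&1&1&1&1\\1&1&\omega&\omega^2&\omega^2&\omega\\1&\omega&1&\omega&\omega^2&\omega^2\\1&\omega^2&\omega&1&\omega&\omega^2\\1&\omega^2&\omega^2&\omega&1&\omega\\1&\omega&\omega^2&\omega^2&\omega&1\end{bmatrix}.\] *)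

(* Complex numbers are modelled by an arbitrary
   numClosedFieldType C. *)
From HB Require Import structures.
From mathcomp Require Import all_boot all_order all_algebra all_fingroup.
Set Implicit Arguments. Unset Strict Implicit. Unset Printing Implicit Defensive.
Import Order.TTheory GRing.Theory Num.Theory.
Local Open Scope ring_scope.

Definition adjmx (C : numClosedFieldType) m n (A : 'M[C]_(m, n)) : 'M[C]_(n, m) :=
  (map_mx Num.conj A)^T.

Definition complex_hadamard (C : numClosedFieldType) n (H : 'M[C]_n) : Prop :=
  (forall i j, `|H i j| = 1) /\ H *m adjmx H = (n%:R)%:M.

Definition dephased (C : numClosedFieldType) n (H : 'M[C]_n.+1) : Prop :=
  forall i, H ord0 i = 1 /\ H i ord0 = 1.

Definition diag_unitary (C : numClosedFieldType) n (D : 'M[C]_n) : Prop :=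
  exists d : 'rV[C]_n, (forall i, `|d 0 i| = 1) /\ D = diag_mx d.

Definition hadamard_equiv (C : numClosedFieldType) n (H K : 'M[C]_n) : Prop :=
  exists (s1 s2 : 'S_n) (D1 D2 : 'M[C]_n),
    diag_unitary D1 /\ diag_unitary D2 /\
    K = perm_mx s1 *m D1 *m H *m D2 *m perm_mx s2.

Definition in_K6_3 (C : numClosedFieldType) (H : 'M[C]_6) : Prop :=
  exists K : 'M[C]_6, complex_hadamard K /\ dephased K /\ hadamard_equiv H K /\
    exists i j : 'I_6, i != ord0 /\ j != ord0 /\ K i j = -1.

(* omega = e^{2 pi i / 3} = (-1 + i sqrt 3) / 2 *)
Definition omega (C : numClosedFieldType) : C := (-1 + 'i * sqrtC 3) / 2.

Definition S6_exps : seq (seq nat) :=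
  [:: [:: 0; 0; 0; 0; 0; 0];
      [:: 0; 0; 1; 2; 2; 1];
      [:: 0; 1; 0; 1; 2; 2];
      [:: 0; 2; 1; 0; 1; 2];
      [:: 0; 2; 2; 1; 0; 1];
      [:: 0; 1; 2; 2; 1; 0]]%N.

Definition S6_0 (C : numClosedFieldType) : 'M[C]_6 :=
  \matrix_(i < 6, j < 6) (omega C) ^+ (nth 0%N (nth [::] S6_exps i) j).

From HB Require Import structures.
From mathcomp Require Import all_boot all_order all_algebra all_fingroup.
From mathcomp Require Import ring zify.
Import Order.TTheory GRing.Theory Num.Theory.
Set Implicit Arguments. Unset Strict Implicit. Unset Printing Implicit Defensive.
Local Open Scope ring_scope.

(* By transposition it suffices to treat a row r.  Orthogonality to the first
   row forces r to contain each of 1, ω, ω^2 exactly twice; ordering the columns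
   as (0, j1 | k, k' | m, m') accordingly, orthogonality to rows 0 and r puts
   every other row without -1 in column j1 into the normal form
   (1, a, ω^2 {1, a}, ω {1, a}), the order inside each pair being recorded by a
   two-bit pattern.  A -1 in the core, or two rows with equal patterns (whose
   j1-entries are then opposite), yields K_6^(3) by renormalizing at a row.
   Otherwise the four remaining rows realize all four patterns; their mutual
   orthogonality forces the j1-entries b^2, b, b, b^2 with b = ω or ω^2, and H
   is a permuted and rescaled copy of S_6^(0). *)

Section Unimodular.
Variable C : numClosedFieldType.

Lemma conj_unit (z : C) : `|z| = 1 -> z^* = z^-1.
Proof. by move=> z1; rewrite invC_norm z1 expr1n invr1 mul1r. Qed.

Lemma unit_neq0 (z : C) : `|z| = 1 -> z != 0.
Proof. by move=> z1; rewrite -normr_eq0 z1 oner_eq0. Qed.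

Lemma two_plus_neq0 (z : C) : `|z| = 1 -> 2 + z != 0.
Proof.
move=> z1; apply/eqP => z2.
have zE : z = -2 by apply/eqP; rewrite -subr_eq0 opprK addrC z2.
by move: z1; rewrite zE normrN normr_nat => /eqP; rewrite pnatr_eq1.
Qed.

(* Two unimodular numbers are determined, up to order, by their nonzero sum:
   conjugating y + z = u + v gives y^-1 + z^-1 = u^-1 + v^-1, hence yz = uv,
   so y and z are the two roots of the same quadratic as u and v. *)
Lemma unimodular_pair (y z u v : C) :
  `|y| = 1 -> `|z| = 1 -> `|u| = 1 -> `|v| = 1 -> y + z = u + v -> u + v != 0 ->
  y = (if y == u then u else v) /\ z = (if y == u then v else u).
Proof.
move=> y1 z1 u1 v1 e nz.
have y0 := unit_neq0 y1; have z0 := unit_neq0 z1.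
have u0 := unit_neq0 u1; have v0 := unit_neq0 v1.
have einv : y^-1 + z^-1 = u^-1 + v^-1.
  by rewrite -!conj_unit // -!rmorphD e.
have eprod : y * z = u * v.
  have key : (y + z) * (u * v) = (u + v) * (y * z).
    transitivity ((y^-1 + z^-1) * (y * z * u * v)); first by field; rewrite y0 z0.
    by rewrite einv; field; rewrite u0 v0.
  have nz' : y + z != 0 by rewrite e.
  by apply: (mulfI nz'); rewrite key e.
have : (y - u) * (y - v) = 0.
  have -> : (y - u) * (y - v) = y * y - (u + v) * y + u * v by ring.
  by rewrite -e -eprod; ring.
move/eqP; rewrite mulf_eq0 !subr_eq0 => /orP[] /eqP yuv.
- by rewrite yuv eqxx; split=> //; apply: (addrI u); rewrite -e yuv.
- case: eqP => [yu|_]; split=> //.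
  + by apply: (addrI u); rewrite -e yu.
  + by apply: (addrI y); rewrite e yuv addrC.
Qed.

Lemma unimodular_pair_scaled (y z c a : C) :
  `|y| = 1 -> `|z| = 1 -> `|c| = 1 -> `|a| = 1 -> 1 + a != 0 -> y + z = c * (1 + a) ->
  y = c * (if y == c then 1 else a) /\ z = c * (if y == c then a else 1).
Proof.
move=> y1 z1 c1 a1 a_neq e.
have ca1 : `|c * a| = 1 by rewrite normrM c1 a1 mulr1.
have sum_neq : c + c * a != 0 by rewrite -{1}[c]mulr1 -mulrDr mulf_neq0 // unit_neq0.
have e' : y + z = c + c * a by rewrite e mulrDr mulr1.
have [ey ez] := unimodular_pair y1 z1 c1 ca1 e' sum_neq.
by rewrite {1}ey {1}ez; case: (y == c); rewrite mulr1.
Qed.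

Lemma mul_conj_unit (u c d : C) : `|u| = 1 -> (u * c) * (u * d)^* = c * d^*.
Proof.
move=> u1; rewrite rmorphM /=.
have -> : u * c * (u^* * d^*) = u * u^* * (c * d^*) by ring.
by rewrite -normCK u1 expr1n mul1r.
Qed.

End Unimodular.

Section CubeRoots.
Variable C : numClosedFieldType.
Local Notation w := (omega C).

Lemma omega_root : w ^+ 2 + w + 1 = 0.
Proof.
have s3 : sqrtC 3 * sqrtC 3 = 3 :> C by rewrite -expr2 sqrtCK.
have ii : 'i * 'i = -1 :> C by rewrite -expr2 sqrCi.
have h2 : (2 : C) != 0 by rewrite pnatr_eq0.
rewrite /omega; set s := sqrtC 3 in s3 *.
have -> : ((-1 + 'i * s) / 2) ^+ 2 + (-1 + 'i * s) / 2 + 1 =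
          (3 + ('i * 'i) * (s * s)) / 4 by field.
by rewrite s3 ii mulN1r subrr mul0r.
Qed.

Lemma omega3 : w ^+ 3 = 1.
Proof.
have -> : w ^+ 3 = (w - 1) * (w ^+ 2 + w + 1) + 1 by ring.
by rewrite omega_root mulr0 add0r.
Qed.

Lemma omega_modE n : w ^+ n = w ^+ (n %% 3)%N.
Proof. by rewrite {1}(divn_eq n 3) exprD mulnC exprM omega3 expr1n mul1r. Qed.

Lemma omega_neq1 : w != 1.
Proof.
apply/eqP => w1; have := omega_root; rewrite w1 expr1n => /eqP.
by rewrite -[1 + 1 + 1](natrD _ 2 1) pnatr_eq0.
Qed.

Lemma omega2_neq1 : w ^+ 2 != 1.
Proof.
apply: contra omega_neq1 => /eqP w21.
by rewrite -omega3 exprS w21 mulr1.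
Qed.

Lemma omega_neq_omega2 : w != w ^+ 2.
Proof.
apply: contra omega2_neq1 => /eqP ww2.
have : w ^+ 3 = w ^+ 2 by rewrite exprS -ww2 -expr2 -ww2.
by rewrite omega3 => <-.
Qed.

Lemma omega_eqF :
  ((w == 1) = false) * ((1 == w) = false) * ((w ^+ 2 == 1) = false) *
  ((1 == w ^+ 2) = false) * ((w == w ^+ 2) = false) * ((w ^+ 2 == w) = false).
Proof.
have w1 := negPf omega_neq1; have w21 := negPf omega2_neq1.
have ww2 := negPf omega_neq_omega2.
by rewrite !(eq_sym 1) (eq_sym (w ^+ 2) w) w1 w21 ww2.
Qed.

Lemma norm_omegaX n : `|w ^+ n| = 1.
Proof.
have /eqP : `|w| ^+ 3 = 1 by rewrite -normrX omega3 normr1.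
by rewrite normrX pexpr_eq1 // => /eqP ->; rewrite expr1n.
Qed.

Lemma norm_omega : `|w| = 1.
Proof. by rewrite -[w]expr1 norm_omegaX. Qed.

Lemma conj_omegaX n : (w ^+ n)^* = w ^+ (2 * n).
Proof.
have w0 : w ^+ n != 0 by rewrite -normr_eq0 norm_omegaX oner_neq0.
rewrite conj_unit ?norm_omegaX //; apply: (mulfI w0).
by rewrite divff // -exprD -mulSn exprM omega3 expr1n.
Qed.

Lemma conj_omega : w^* = w ^+ 2.
Proof. by rewrite -[w]expr1 conj_omegaX. Qed.

Lemma conj_omega2 : (w ^+ 2)^* = w.
Proof. by rewrite conj_omegaX omega_modE. Qed.

Lemma cube_rootP (z : C) : z ^+ 3 = 1 -> [\/ z = 1, z = w | z = w ^+ 2].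
Proof.
move=> z3.
have : (z - 1) * ((z - w) * (z - w ^+ 2)) = 0.
  have -> : (z - 1) * ((z - w) * (z - w ^+ 2)) =
    z ^+ 3 - 1 - (z ^+ 2 - z) * (w ^+ 2 + w + 1) + (z - 1) * (w ^+ 3 - 1) by ring.
  by rewrite z3 omega_root omega3 !subrr !mulr0 subr0 addr0.
move/eqP; rewrite !mulf_eq0 !subr_eq0 => /orP[/eqP|/orP[/eqP|/eqP]] ->;
  [exact: Or31 | exact: Or32 | exact: Or33].
Qed.

Lemma omega_quadratic_roots (b : C) : b ^+ 2 + b + 1 = 0 -> b = w \/ b = w ^+ 2.
Proof.
move=> b0.
have : (b - w) * (b - w ^+ 2) = 0.
  have -> : (b - w) * (b - w ^+ 2) =
    (b ^+ 2 + b + 1) - b * (w ^+ 2 + w + 1) + (w ^+ 3 - 1) by ring.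
  by rewrite b0 omega_root omega3 mulr0 !subrr add0r.
by move/eqP; rewrite mulf_eq0 !subr_eq0 => /orP[] /eqP; [left|right].
Qed.

(* Over ℕ, c0 + c1 ω + c2 ω^2 vanishes only when c0 = c1 = c2; the proof
   compares the relation with its complex conjugate. *)
Lemma omega_nat_combination (c0 c1 c2 : nat) :
  c0%:R + c1%:R * w + c2%:R * w ^+ 2 = 0 :> C -> c0 = c1 /\ c1 = c2.
Proof.
move=> e.
have e' : c0%:R + c1%:R * w ^+ 2 + c2%:R * w = 0 :> C.
  have cM (n : nat) (x : C) : (n%:R * x)^* = n%:R * x^* by rewrite rmorphM rmorph_nat.
  have := congr1 Num.conj e.
  by rewrite !rmorphD /= !cM rmorph_nat conj_omega conj_omega2 conjC0.
have e12 : c1 = c2.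
  have : (c1%:R - c2%:R) * (w - w ^+ 2) = 0 :> C.
    by rewrite -[RHS](subrr 0) -{1}e -e'; ring.
  move/eqP; rewrite mulf_eq0 !subr_eq0 (negPf omega_neq_omega2) orbF eqr_nat.
  by move/eqP.
split=> //; apply/eqP; rewrite -(eqr_nat C) -subr_eq0; apply/eqP.
have -> : c0%:R - c1%:R = (c0%:R + c1%:R * w + c2%:R * w ^+ 2)
                           - c1%:R * (w ^+ 2 + w + 1) :> C by rewrite e12; ring.
by rewrite e omega_root mulr0 subr0.
Qed.

(* Two linear relations that determine the block sums of a row orthogonal to
   both the all-ones row and a row (1, 1, ω, ω, ω^2, ω^2): P = ω^2 S, Q = ω S. *)
Lemma omega_block (S P Q : C) :
  S + P + Q = 0 -> S + w ^+ 2 * P + w * Q = 0 -> P = w ^+ 2 * S /\ Q = w * S.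
Proof.
move=> e1 e2.
have : (1 - w) * (S - w * P) = 0.
  have -> : (1 - w) * (S - w * P) = (S + w ^+ 2 * P + w * Q) - w * (S + P + Q) by ring.
  by rewrite e1 e2 mulr0 subr0.
move/eqP; rewrite mulf_eq0 !subr_eq0 (eq_sym 1) omega_eqF /= => /eqP eS.
have eP : P = w ^+ 2 * S by rewrite eS mulrA -exprSr omega3 mul1r.
split=> //; apply/eqP; rewrite -subr_eq0; apply/eqP.
have -> : Q - w * S = (S + P + Q) - S * (w ^+ 2 + w + 1) by rewrite eP; ring.
by rewrite e1 omega_root mulr0 subr0.
Qed.

End CubeRoots.

Section MonomialEquivalence.
Variables (C : numClosedFieldType) (n : nat).
Implicit Types (H K : 'M[C]_n) (s t : 'S_n) (u v : 'I_n -> C).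

(* Up to the choice of s, t, u, v
   these are exactly the matrices P1 D1 H D2 P2 of the definition of
   equivalence, which is easier to handle entrywise in this form. *)
Definition mtrans H s t u v : 'M[C]_n := \matrix_(i, j) (u i * H (s i) (t j) * v j).

Definition unimodular (u : 'I_n -> C) : Prop := forall i, `|u i| = 1.

Lemma perm_diag_mulmxE H s1 s2 (d1 d2 : 'rV[C]_n) :
  perm_mx s1 *m diag_mx d1 *m H *m diag_mx d2 *m perm_mx s2 =
  mtrans H s1 (s2^-1)%g (fun i => d1 0 (s1 i)) (fun j => d2 0 ((s2^-1)%g j)).
Proof.
rewrite -[s2]invgK -col_permE -!mulmxA -row_permE mul_diag_mx mul_mx_diag.
by apply/matrixP => i j; rewrite !mxE !invgK; ring.
Qed.

Lemma equiv_mtrans H s t u v :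
  unimodular u -> unimodular v -> hadamard_equiv H (mtrans H s t u v).
Proof.
move=> u1 v1; pose d1 := \row_i u ((s^-1)%g i); pose d2 := \row_j v ((t^-1)%g j).
exists s, (t^-1)%g, (diag_mx d1), (diag_mx d2).
split; first by exists d1; split=> // i; rewrite mxE.
split; first by exists d2; split=> // i; rewrite mxE.
by rewrite perm_diag_mulmxE invgK; apply/matrixP => i j; rewrite !mxE !permK.
Qed.

Lemma mtrans_of_equiv H K : hadamard_equiv H K ->
  exists s t u v, [/\ unimodular u, unimodular v & K = mtrans H s t u v].
Proof.
move=> [s1 [s2 [D1 [D2 [[d1 [d1u ->]] [[d2 [d2u ->]] ->]]]]]].
rewrite (perm_diag_mulmxE H s1 s2); do 4 eexists.
by split; last reflexivity; move=> i; [apply: d1u | apply: d2u].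
Qed.

Lemma trmx_mtrans H s t u v : (mtrans H s t u v)^T = mtrans H^T t s v u.
Proof. by apply/matrixP => i j; rewrite !mxE; ring. Qed.

Lemma hadamard_rowsP H : H *m adjmx H = n%:R%:M <->
  (forall i l, \sum_j H i j * (H l j)^* = n%:R *+ (i == l)).
Proof.
have entryE i l : (H *m adjmx H) i l = \sum_j H i j * (H l j)^*.
  by rewrite !mxE; apply: eq_bigr => j _; rewrite !mxE.
split=> [HH i l | rows]; first by rewrite -entryE HH mxE.
by apply/matrixP => i l; rewrite entryE rows mxE.
Qed.

Lemma hadamard_orth H x y : complex_hadamard H -> x != y ->
  \sum_j H x j * (H y j)^* = 0.
Proof. by move=> [_ /hadamard_rowsP rows] xy; rewrite rows (negPf xy). Qed.

Lemma hadamard_mtrans H s t u v : unimodular u -> unimodular v ->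
  complex_hadamard H -> complex_hadamard (mtrans H s t u v).
Proof.
move=> u1 v1 [H1 /hadamard_rowsP rows]; split.
  by move=> i j; rewrite mxE !normrM u1 v1 H1 !mulr1.
apply/hadamard_rowsP => i l.
have vv j : v j * (v j)^* = 1 by rewrite -normCK v1 expr1n.
transitivity (u i * (u l)^* * \sum_j H (s i) j * (H (s l) j)^*).
  rewrite [in RHS](reindex_perm t) mulr_sumr; apply: eq_bigr => j _.
  rewrite !mxE !rmorphM /=.
  transitivity (u i * (u l)^* * (H (s i) (t j) * (H (s l) (t j))^*) * (v j * (v j)^*)).
    by ring.
  by rewrite vv mulr1.
rewrite rows (inj_eq perm_inj); case: eqVneq => [->|_]; last by rewrite mulr0n mulr0.
by rewrite -normCK u1 expr1n mul1r.
Qed.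

(* The transpose of a complex Hadamard matrix is Hadamard: H H^* = n I
   forces H^* H = n I, and H^T (H^T)^* = (H^* H)^T. *)
Lemma hadamard_trmx H : complex_hadamard H -> complex_hadamard H^T.
Proof.
move=> [H1 HH]; split=> [i j|]; first by rewrite mxE.
case: (posnP n) => [n0 | n_gt0].
  by apply/matrixP => i; have := ltn_ord i; rewrite {2}n0.
have nz : n%:R != 0 :> C by rewrite pnatr_eq0 -lt0n.
have HinvH : (n%:R^-1 *: adjmx H) *m H = 1%:M.
  by apply: mulmx1C; rewrite -scalemxAr HH -scalemx1 scalerA mulVf // scale1r.
have adjHH : adjmx H *m H = n%:R%:M.
  by rewrite -[adjmx H](scalerKV nz) -scalemxAl HinvH scalemx1.
have -> : adjmx H^T = (adjmx H)^T by apply/matrixP => i j; rewrite !mxE.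
by rewrite -trmx_mul adjHH tr_scalar_mx.
Qed.

Lemma equiv_trmx H K : hadamard_equiv H K -> hadamard_equiv H^T K^T.
Proof.
case/mtrans_of_equiv => s [t [u [v [u1 v1 ->]]]].
by rewrite trmx_mtrans; apply: equiv_mtrans.
Qed.

End MonomialEquivalence.

Lemma dephased_trmx (C : numClosedFieldType) n (H : 'M[C]_n.+1) :
  dephased H -> dephased H^T.
Proof. by move=> H_deph i; rewrite !mxE; case: (H_deph i). Qed.

Lemma K6_trmx (C : numClosedFieldType) (H : 'M[C]_6) : in_K6_3 H -> in_K6_3 H^T.
Proof.
move=> [K [K_had [K_deph [HK [i [j [i0 [j0 Kij]]]]]]]].
exists K^T; split; first exact: hadamard_trmx.
split; first exact: dephased_trmx.
split; first exact: equiv_trmx.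
by exists j, i; rewrite mxE.
Qed.

(* Renormalizing at a row: if two distinct rows x, y of a dephased Hadamard
   matrix are opposite in some column j <> 0, then swapping rows 0 and x and
   dividing each column by its entry in row x gives a dephased matrix with the
   entry -1 in its core, so H belongs to K_6^(3). *)
Lemma K6_of_opposite_entries (C : numClosedFieldType) (H : 'M[C]_6) x y j :
  complex_hadamard H -> dephased H -> y != x -> j != ord0 ->
  H y j = - H x j -> in_K6_3 H.
Proof.
move=> H_had H_deph yx j0 eyx.
have [H1 _] := H_had.
have HH l : H x l * (H x l)^* = 1 by rewrite -normCK H1 expr1n.
have one1 : unimodular (fun _ : 'I_6 => 1 : C) by move=> i; rewrite normr1.
have conj1 : unimodular (fun l => (H x l)^*) by move=> l; rewrite norm_conjC H1.
exists (mtrans H (tperm ord0 x) 1 (fun=> 1) (fun l => (H x l)^*)).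
split; first exact: hadamard_mtrans.
split.
  move=> l; rewrite !mxE !perm1 tpermL !mul1r HH; split=> //.
  by have [_ ->] := H_deph (tperm ord0 x l); have [_ ->] := H_deph x; rewrite rmorph1 mulr1.
split; first exact: equiv_mtrans.
exists (tperm ord0 x y), j; split; last split=> //.
  by rewrite -[X in _ != X](tpermR ord0 x) (inj_eq perm_inj).
by rewrite !mxE !perm1 tpermK mul1r eyx mulNr HH.
Qed.

Section Reindexing.
Variable n : nat.

Lemma perm_of_list (l : seq 'I_n.+1) : uniq l -> size l = n.+1 ->
  exists p : 'S_n.+1, forall i, p i = nth ord0 l i.
Proof.
move=> l_uniq l_size.
have inj : injective (fun i : 'I_n.+1 => nth ord0 l i).
  by move=> i j /eqP; rewrite nth_uniq ?l_size // => /eqP; apply: val_inj.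
by exists (perm inj) => i; rewrite permE.
Qed.

Lemma sum_list_reindex (R : nmodType) (F : 'I_n.+1 -> R) (l : seq 'I_n.+1) :
  uniq l -> size l = n.+1 -> \sum_j F j = \sum_(i < n.+1) F (nth ord0 l i).
Proof.
move=> l_uniq l_size; have [p pE] := perm_of_list l_uniq l_size.
by rewrite (reindex_perm p); apply: eq_bigr => i _; rewrite pE.
Qed.

Lemma inj_card_onto (aT rT : finType) (A : {set aT}) (f : aT -> rT) :
  {in A &, injective f} -> #|A| = #|rT| -> forall y, exists2 x, x \in A & f x = y.
Proof.
move=> f_inj cardA y.
have /eqP fA : f @: A == [set: rT].
  by rewrite eqEcard subsetT cardsT /= (card_in_imset f_inj) cardA.
have /imsetP[x xA ->] : y \in f @: A by rewrite fA inE.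
by exists x.
Qed.

End Reindexing.

Section CubeRootRows.
Variable C : numClosedFieldType.
Local Notation w := (omega C).

Definition count_val n (z : 'I_n -> C) (c : C) : nat := #|[set j | z j == c]|.

Lemma sum_indicator n (P : pred 'I_n) (c : C) :
  \sum_j (P j)%:R * c = #|[set j | P j]|%:R * c.
Proof.
rewrite -mulr_suml -sum1dep_card natr_sum [in RHS]big_mkcond /=.
by congr (_ * _); apply: eq_bigr => j _; case: (P j).
Qed.

(* A vector of cube roots of unity with zero sum takes each of the values
   1, ω, ω^2 equally often, since 1 + ω + ω^2 = 0 is the only relation. *)
Lemma cube_roots_balanced n (z : 'I_n -> C) :
  (forall j, z j ^+ 3 = 1) -> \sum_j z j = 0 ->
  count_val z 1 = count_val z w /\ count_val z w = count_val z (w ^+ 2).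
Proof.
move=> z3 z_sum; apply: (@omega_nat_combination C).
rewrite -z_sum -[X in X + _ + _]mulr1 /count_val -!sum_indicator -!big_split /=.
apply: eq_bigr => j _.
by have [] := cube_rootP (z3 j) => ->;
  rewrite !eqxx !omega_eqF ?mul0r ?mul1r ?mulr1 ?add0r ?addr0.
Qed.

Lemma cube_roots_count n (z : 'I_n -> C) : (forall j, z j ^+ 3 = 1) ->
  (count_val z 1 + count_val z w + count_val z (w ^+ 2) = n)%N.
Proof.
move=> z3; rewrite /count_val -!sum1dep_card -[n in RHS]card_ord -sum1_card.
rewrite [in LHS]big_mkcond [X in (_ + X + _)%N]big_mkcond [X in (_ + X)%N]big_mkcond.
rewrite -!big_split /=; apply: eq_bigr => j _.
by have [] := cube_rootP (z3 j) => ->; rewrite !eqxx !omega_eqF.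
Qed.

Lemma count2P n (z : 'I_n -> C) c : count_val z c = 2 ->
  exists x y, [/\ x != y, z x = c & z y = c].
Proof.
move=> /eqP /cards2P [x [y [xy zc]]].
have mem j : (z j == c) = (j \in [set x; y]) by rewrite -zc inE.
by exists x, y; split=> //; apply/eqP; rewrite mem !inE eqxx ?orbT.
Qed.

Lemma cube_root_row_shape (z : 'I_6 -> C) :
  z ord0 = 1 -> (forall j, z j ^+ 3 = 1) -> \sum_j z j = 0 ->
  exists j1 k k' m m' : 'I_6, uniq [:: ord0; j1; k; k'; m; m'] /\
    [/\ z j1 = 1, z k = w, z k' = w, z m = w ^+ 2 & z m' = w ^+ 2].
Proof.
move=> z0 z3 z_sum.
have [bal1 bal2] := cube_roots_balanced z3 z_sum.
have total := cube_roots_count z3.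
have [a [b [ab za zb]]] : exists a b, [/\ a != b, z a = 1 & z b = 1].
  by apply: count2P; lia.
have [k [k' [kk' zk zk']]] : exists k k', [/\ k != k', z k = w & z k' = w].
  by apply: count2P; lia.
have [m [m' [mm' zm zm']]] : exists m m', [/\ m != m', z m = w ^+ 2 & z m' = w ^+ 2].
  by apply: count2P; lia.
have [j1 [j10 zj1]] : exists j1, j1 != ord0 /\ z j1 = 1.
  case: (eqVneq a ord0) => [a0|a_neq0]; last by exists a.
  by exists b; rewrite -a0 eq_sym.
exists j1, k, k', m, m'; split=> //.
have val_neq x y : z x != z y -> x != y by apply: contraNneq => ->.
rewrite /= !inE !negb_or (eq_sym ord0) j10 kk' mm' /=.
by rewrite !val_neq //; rewrite ?z0 ?zj1 ?zk ?zk' ?zm ?zm' ?omega_eqF.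
Qed.

End CubeRootRows.

Section NormalRows.
Variable C : numClosedFieldType.
Local Notation w := (omega C).

(* The normal form of a row: listed along a column order (0, j1, k, k', m, m'),
   a row orthogonal to the all-ones row and to (1, 1, ω, ω, ω^2, ω^2) reads
   (1, a, ω^2 {1, a}, ω {1, a}), where each boolean of the pattern p records
   the order in which the pair {1, a} appears in its block. *)
Definition nf_row (a : C) (p : bool * bool) (i : 'I_6) : C :=
  nth 0 [:: 1; a; w ^+ 2 * (if p.1 then 1 else a); w ^+ 2 * (if p.1 then a else 1);
           w * (if p.2 then 1 else a); w * (if p.2 then a else 1)] i.

(* Orthogonality of two normal-form rows, multiplied by b: each block
   contributes a + b when the patterns agree on it and a b + 1 otherwise. *)
Lemma nf_row_orth (a b : C) (p q : bool * bool) : `|a| = 1 -> `|b| = 1 ->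
  \sum_i nf_row a p i * (nf_row b q i)^* = 0 ->
  (a + b) + (if p.1 == q.1 then a + b else a * b + 1)
          + (if p.2 == q.2 then a + b else a * b + 1) = 0.
Proof.
move=> a1 b1; have b0 := unit_neq0 b1.
rewrite !big_ord_recl big_ord0 /nf_row /= !mul_conj_unit ?norm_omega ?norm_omegaX //.
case: p q => [[] []] [[] []]; rewrite /= ?rmorph1 ?conj_unit // => orth;
  by rewrite -(mulr0 b) -orth; field.
Qed.

End NormalRows.

Section FourPatterns.
Variable C : numClosedFieldType.
Local Notation w := (omega C).

(* From 2x + 2y + xy + 1 = 0 and y^2 + y + 1 = 0 with |y| = 1 follows x = y^2:
   the difference factors as (x - y^2)(2 + y) and 2 + y cannot vanish. *)
Lemma square_of_relation (x y : C) : `|y| = 1 ->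
  2 * x + 2 * y + x * y + 1 = 0 -> y ^+ 2 + y + 1 = 0 -> x = y ^+ 2.
Proof.
move=> y1 exy ey.
have : (x - y ^+ 2) * (2 + y) = 0.
  have -> : (x - y ^+ 2) * (2 + y) =
    (2 * x + 2 * y + x * y + 1) - (y + 1) * (y ^+ 2 + y + 1) by ring.
  by rewrite exy ey mulr0 subr0.
by move/eqP; rewrite mulf_eq0 (negPf (two_plus_neq0 y1)) orbF subr_eq0 => /eqP.
Qed.

(* The orthogonality relations (nf_row_orth) among four normal-form rows with
   the patterns ff, ft, tf, tt force their j1-entries to be b^2, b, b, b^2
   for a primitive cube root of unity b. *)
Lemma four_patterns_values (aff aft atf att : C) :
  `|aff| = 1 -> `|aft| = 1 ->
  (aff + aft) + (aff + aft) + (aff * aft + 1) = 0 ->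
  (aff + atf) + (aff * atf + 1) + (aff + atf) = 0 ->
  (aft + atf) + (aft * atf + 1) + (aft * atf + 1) = 0 ->
  (aft + att) + (aft * att + 1) + (aft + att) = 0 ->
  [/\ aft = w \/ aft = w ^+ 2, atf = aft, aff = aft ^+ 2 & att = aft ^+ 2].
Proof.
move=> aff1 aft1 e_ff_ft e_ff_tf e_ft_tf e_ft_tt.
have e_tf : atf = aft.
  have : (aft - atf) * (2 + aff) = 0.
    by rewrite -(subrr 0) -{1}e_ff_ft -e_ff_tf; ring.
  by move/eqP; rewrite mulf_eq0 (negPf (two_plus_neq0 aff1)) orbF subr_eq0 => /eqP.
have e_b : aft ^+ 2 + aft + 1 = 0.
  have two0 : (2 : C) != 0 by rewrite pnatr_eq0.
  by apply: (mulfI two0); rewrite mulr0 -[RHS]e_ft_tf e_tf; ring.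
split=> //; first exact: omega_quadratic_roots.
- by apply: square_of_relation aft1 _ e_b; rewrite -e_ff_ft; ring.
- by apply: square_of_relation aft1 _ e_b; rewrite -e_ft_tt; ring.
Qed.

(* The 6 x 6 table formed by the all-ones row, the row of cube roots and the
   four normal-form rows with b = ω^e. *)
Definition cube_row (j : 'I_6) : C := nth 0 [:: 1; 1; w; w; w ^+ 2; w ^+ 2] j.

Definition nf_table (e : nat) (i j : 'I_6) : C :=
  nth (fun=> 0) [:: fun=> 1; cube_row;
    nf_row (w ^+ (2 * e)) (false, false); nf_row (w ^+ e) (false, true);
    nf_row (w ^+ e) (true, false); nf_row (w ^+ (2 * e)) (true, true)] i j.

Lemma omega_expE (n1 n2 : nat) : (n1 %% 3 = n2 %% 3)%N -> w ^+ n1 = w ^+ n2.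
Proof. by move=> e; rewrite omega_modE e -omega_modE. Qed.

Local Notation ord6 n := (@Ordinal 6 n isT).

(* Both tables (e = 1, 2) become S_6^(0) after a column permutation and, for
   e = 1, a rescaling of the rows by powers of ω; the 36 entries are then
   compared as powers of ω, with exponents taken modulo 3. *)
Lemma nf_table_equiv_S6 (H : 'M[C]_6) (rho pi : 'S_6) (e : nat) :
  e = 1%N \/ e = 2%N -> (forall i j, H (rho i) (pi j) = nf_table e i j) ->
  hadamard_equiv H (S6_0 C).
Proof.
move=> [] -> table.
- have [tau tauE] := @perm_of_list 5 [:: ord6 1; ord6 0; ord6 3; ord6 4; ord6 5; ord6 2] isT erefl.
  have -> : S6_0 C = mtrans H rho (tau * pi)%g
      (fun i => w ^+ nth 0%N [:: 0; 0; 1; 2; 2; 1]%N i) (fun=> 1).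
    apply/matrixP => i j; rewrite !mxE permM tauE table.
    case: i => [[|[|[|[|[|[|//]]]]]] ?]; case: j => [[|[|[|[|[|[|//]]]]]] ?];
      rewrite /nf_table /nf_row /cube_row /=;
      by rewrite ?mulr1 ?mul1r -?(expr0 w) -[w]expr1 -?exprM -?exprD; apply: omega_expE.
  by apply: equiv_mtrans => i; rewrite ?norm_omegaX ?normr1.
- have [tau tauE] := @perm_of_list 5 [:: ord6 0; ord6 1; ord6 2; ord6 5; ord6 4; ord6 3] isT erefl.
  have -> : S6_0 C = mtrans H rho (tau * pi)%g (fun=> 1) (fun=> 1).
    apply/matrixP => i j; rewrite !mxE permM tauE table.
    case: i => [[|[|[|[|[|[|//]]]]]] ?]; case: j => [[|[|[|[|[|[|//]]]]]] ?];
      rewrite /nf_table /nf_row /cube_row /=;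
      by rewrite ?mulr1 ?mul1r -?(expr0 w) -[w]expr1 -?exprM -?exprD; apply: omega_expE.
  by apply: equiv_mtrans => i; rewrite normr1.
Qed.

End FourPatterns.

Section RowOfCubeRoots.
Variables (C : numClosedFieldType) (H : 'M[C]_6).
Local Notation w := (omega C).
Hypotheses (H_had : complex_hadamard H) (H_deph : dephased H).

(* Row r <> 0 reads (1, 1, ω, ω, ω^2, ω^2) along the column order cols, and
   no row has the entry -1 in column j1 (that case leads directly to K_6^(3)). *)
Variables (r j1 k k' m m' : 'I_6).
Local Notation cols := [:: ord0; j1; k; k'; m; m'].
Hypothesis cols_uniq : uniq cols.
Hypotheses (Hr_j1 : H r j1 = 1) (Hr_k : H r k = w) (Hr_k' : H r k' = w).
Hypotheses (Hr_m : H r m = w ^+ 2) (Hr_m' : H r m' = w ^+ 2).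
Hypothesis r_neq0 : r != ord0.
Hypothesis no_minus_one : forall x, x != ord0 -> H x j1 != -1.

Lemma H_norm i j : `|H i j| = 1. Proof. by case: H_had. Qed.
Lemma H_row0 j : H ord0 j = 1. Proof. by case: (H_deph j). Qed.
Lemma H_col0 i : H i ord0 = 1. Proof. by case: (H_deph i). Qed.

Definition other_rows : {set 'I_6} := [set x | (x != ord0) && (x != r)].

Lemma card_other_rows : #|other_rows| = #|{: bool * bool}|.
Proof.
have -> : other_rows = ~: [set ord0; r] by apply/setP => x; rewrite !inE negb_or.
have := cardsC [set ord0; r]; rewrite cards2 eq_sym r_neq0 card_ord card_prod card_bool.
by move=> h; apply/eqP; rewrite -(eqn_add2l 2) h.
Qed.

(* The pattern of a row x records the orders of its two blocks. *)
Definition pattern (x : 'I_6) : bool * bool := (H x k == w ^+ 2, H x m == w).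

(* Every other row is in normal form: orthogonality to rows 0 and r fixes the
   block sums, and a block of two unimodular entries with a nonzero prescribed
   sum is determined up to order. *)
Lemma nf_rowE x : x \in other_rows ->
  forall i : 'I_6, H x (nth ord0 cols i) = nf_row (H x j1) (pattern x) i.
Proof.
rewrite inE => /andP[x0 xr]; have := no_minus_one x0; set a := H x j1 => xj1.
have orth y : x != y -> \sum_(i < 6) H x (nth ord0 cols i) * (H y (nth ord0 cols i))^* = 0.
  by move=> xy; rewrite -(sum_list_reindex (fun j => H x j * (H y j)^*)) ?hadamard_orth.
have := orth _ x0; have := orth _ xr.
rewrite !big_ord_recl !big_ord0 /= !H_row0 !H_col0 Hr_j1 Hr_k Hr_k' Hr_m Hr_m'.
rewrite rmorph1 conj_omega conj_omega2 !mulr1 !addr0 -/a => orth_r orth_0.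
have [sum_k sum_m] : H x k + H x k' = w ^+ 2 * (1 + a) /\ H x m + H x m' = w * (1 + a).
  by apply: omega_block; [rewrite -orth_0 | rewrite -orth_r]; ring.
have a_neq : 1 + a != 0 by apply: contra xj1; rewrite addrC addr_eq0.
have [ek ek'] := unimodular_pair_scaled (H_norm x k) (H_norm x k') (norm_omegaX C 2)
  (H_norm x j1) a_neq sum_k.
have [em em'] := unimodular_pair_scaled (H_norm x m) (H_norm x m') (norm_omega C)
  (H_norm x j1) a_neq sum_m.
by case=> [[|[|[|[|[|[|//]]]]]] ?]; rewrite /nf_row /= ?H_col0.
Qed.

Lemma nf_rows_relation x y : x \in other_rows -> y \in other_rows -> x != y ->
  (H x j1 + H y j1)
    + (if (pattern x).1 == (pattern y).1 then H x j1 + H y j1 else H x j1 * H y j1 + 1)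
    + (if (pattern x).2 == (pattern y).2 then H x j1 + H y j1 else H x j1 * H y j1 + 1)
  = 0.
Proof.
move=> xO yO xy; apply: nf_row_orth; rewrite ?H_norm //.
rewrite -[RHS](hadamard_orth H_had xy) [RHS](sum_list_reindex _ cols_uniq) //.
by apply: eq_bigr => i _; rewrite !nf_rowE.
Qed.

(* Two other rows with the same pattern have opposite j1-entries, since their
   orthogonality relation reduces to 3 (a + b) = 0. *)
Lemma twin_patterns_K6 x y : x \in other_rows -> y \in other_rows -> x != y ->
  pattern x = pattern y -> in_K6_3 H.
Proof.
move=> xO yO xy pxy.
have := nf_rows_relation xO yO xy; rewrite pxy !eqxx.
have -> : forall s : C, s + s + s = 3 * s by move=> s; ring.
move/eqP; rewrite mulf_eq0 pnatr_eq0 /= addr_eq0 => /eqP exy.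
have j10 : j1 != ord0 by apply: contraTneq cols_uniq => ->; rewrite cons_uniq in_cons eqxx.
exact: (K6_of_opposite_entries H_had H_deph xy j10 exy).
Qed.

Lemma four_rows_table (e : nat) (xff xft xtf xtt : 'I_6) :
  xff \in other_rows -> xft \in other_rows -> xtf \in other_rows -> xtt \in other_rows ->
  pattern xff = (false, false) -> pattern xft = (false, true) ->
  pattern xtf = (true, false) -> pattern xtt = (true, true) ->
  H xft j1 = w ^+ e -> H xtf j1 = w ^+ e ->
  H xff j1 = w ^+ (2 * e) -> H xtt j1 = w ^+ (2 * e) ->
  exists rho pi : 'S_6, forall i j, H (rho i) (pi j) = nf_table C e i j.
Proof.
move=> ffO ftO tfO ttO pff pft ptf ptt eft etf eff ett.
have rows_uniq : uniq [:: ord0; r; xff; xft; xtf; xtt].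
  have ne x y : pattern x != pattern y -> x != y by apply: contraNneq => ->.
  move: ffO ftO tfO ttO; rewrite !inE.
  move=> /andP[ff0 ffr] /andP[ft0 ftr] /andP[tf0 tfr] /andP[tt0 ttr].
  rewrite /= !inE !negb_or; repeat (apply/andP; split);
    try solve [by rewrite eq_sym | done];
    by apply: ne; rewrite ?pff ?pft ?ptf ?ptt; exact: isT.
have [rho rhoE] := perm_of_list rows_uniq erefl.
have [pi piE] := perm_of_list cols_uniq erefl.
exists rho, pi => i j; rewrite rhoE piE.
case: i => [[|[|[|[|[|[|//]]]]]] ?] /=; rewrite /nf_table /=.
- by rewrite H_row0.
- by case: j => [[|[|[|[|[|[|//]]]]]] ?]; rewrite /= ?H_col0.
- by rewrite nf_rowE // pff eff.
- by rewrite nf_rowE // pft eft.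
- by rewrite nf_rowE // ptf etf.
- by rewrite nf_rowE // ptt ett.
Qed.

Lemma distinct_patterns_S6 :
  {in other_rows &, injective pattern} -> hadamard_equiv H (S6_0 C).
Proof.
move=> pat_inj; have row_of := inj_card_onto pat_inj card_other_rows.
have [xff ffO pff] := row_of (false, false).
have [xft ftO pft] := row_of (false, true).
have [xtf tfO ptf] := row_of (true, false).
have [xtt ttO ptt] := row_of (true, true).
have rel x y (xO : x \in other_rows) (yO : y \in other_rows) (pxy : pattern x != pattern y) :=
  nf_rows_relation xO yO (contra_neq (fun e => congr1 pattern e) pxy).
have := rel _ _ ffO ftO; rewrite pff pft => /(_ isT) /= e_ff_ft.
have := rel _ _ ffO tfO; rewrite pff ptf => /(_ isT) /= e_ff_tf.
have := rel _ _ ftO tfO; rewrite pft ptf => /(_ isT) /= e_ft_tf.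
have := rel _ _ ftO ttO; rewrite pft ptt => /(_ isT) /= e_ft_tt.
have [b_cases e_tf e_ff e_tt] := four_patterns_values (H_norm xff j1) (H_norm xft j1)
  e_ff_ft e_ff_tf e_ft_tf e_ft_tt.
have equiv_of_b e : e = 1%N \/ e = 2%N -> H xft j1 = w ^+ e -> hadamard_equiv H (S6_0 C).
  move=> e12 eft; rewrite eft -exprM mulnC in e_ff e_tt; rewrite eft in e_tf.
  have [rho [pi tab]] := four_rows_table ffO ftO tfO ttO pff pft ptf ptt eft e_tf e_ff e_tt.
  exact: nf_table_equiv_S6 e12 tab.
case: b_cases => be.
- by apply: (equiv_of_b 1%N); [left | rewrite expr1].
- by apply: (equiv_of_b 2%N); [right |].
Qed.

Lemma cube_row_dichotomy : hadamard_equiv H (S6_0 C) \/ in_K6_3 H.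
Proof.
case: (boolP [forall x in other_rows, forall y in other_rows,
                (pattern x == pattern y) ==> (x == y)]) => [pat_inj | ].
  left; apply: distinct_patterns_S6 => x y xO yO pxy.
  by move/forall_inP/(_ x xO)/forall_inP/(_ y yO): pat_inj; rewrite pxy eqxx => /eqP.
case/forall_inPn => x xO /forall_inPn [y yO]; rewrite negb_imply => /andP[/eqP pxy xy].
by right; apply: (twin_patterns_K6 xO yO xy pxy).
Qed.

End RowOfCubeRoots.

Lemma cube_root_row_case (C : numClosedFieldType) (H : 'M[C]_6) r :
  complex_hadamard H -> dephased H -> r != ord0 -> (forall j, H r j ^+ 3 = 1) ->
  hadamard_equiv H (S6_0 C) \/ in_K6_3 H.
Proof.
move=> H_had H_deph r0 r3.
have r_sum : \sum_j H r j = 0.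
  rewrite -[RHS](hadamard_orth H_had r0); apply: eq_bigr => j _.
  by have [-> _] := H_deph j; rewrite rmorph1 mulr1.
have [j1 [k [k' [m [m' [cols_uniq [Hr_j1 Hr_k Hr_k' Hr_m Hr_m']]]]]]] :=
  cube_root_row_shape (H_col0 H_deph r) r3 r_sum.
case: (boolP [exists x, (x != ord0) && (H x j1 == -1)]) => [|no_m1].
  case/existsP => x /andP[x0 /eqP Hx_j1]; right.
  have j10 : j1 != ord0 by apply: contraTneq cols_uniq => ->; rewrite cons_uniq in_cons eqxx.
  by apply: (K6_of_opposite_entries H_had H_deph x0 j10); rewrite Hx_j1 H_row0.
apply: (cube_row_dichotomy H_had H_deph cols_uniq Hr_j1 Hr_k Hr_k' Hr_m Hr_m' r0).
move=> x x0; apply: contraNneq no_m1 => Hx_j1.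
by apply/existsP; exists x; rewrite x0 Hx_j1 eqxx.
Qed.

(* S_6^(0) is symmetric, which transfers the row case to columns. *)
Lemma S6_0_trmx (C : numClosedFieldType) : (S6_0 C)^T = S6_0 C.
Proof.
apply/matrixP => i j; rewrite !mxE.
by case: i => [[|[|[|[|[|[|//]]]]]] ?]; case: j => [[|[|[|[|[|[|//]]]]]] ?].
Qed.

Theorem lemma2p25 (C : numClosedFieldType) (H : 'M[C]_6) :
  complex_hadamard H -> dephased H ->
  ((exists i : 'I_6, i != ord0 /\ forall j, H i j ^+ 3 = 1) \/
   (exists j : 'I_6, j != ord0 /\ forall i, H i j ^+ 3 = 1)) ->
  hadamard_equiv H (S6_0 C) \/ in_K6_3 H.
Proof.
move=> H_had H_deph [[i [i0 row3]] | [j [j0 col3]]].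
  exact: cube_root_row_case H_had H_deph i0 row3.
have col3T l : H^T j l ^+ 3 = 1 by rewrite mxE.
have [HS | HK] := cube_root_row_case (hadamard_trmx H_had) (dephased_trmx H_deph) j0 col3T.
  by left; rewrite -[H]trmxK -S6_0_trmx; apply: equiv_trmx.
by right; rewrite -[H]trmxK; apply: K6_trmx.
Qed.
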